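(* Let $r\ge3$ and $d\in\{1,\dots,r-1\}$. Then there is a brick $M\in\mathrm{rep}_{\mathrm{proj}}(K_r,d)$ which is not $(d+1)$-homogeneous.
   Context: $k$ algebraically closed of arbitrary characteristic. For $n\ge1$, $K_n$ is the Kronecker quiver with arrows $\gamma_1,\dots,\gamma_n:1\to2$, $A_n=\bigoplus_ik\gamma_i$. For $M=(M_1,M_2,(M(\gamma_i))_i)\in\mathrm{rep}(K_r)$ let $\psi_M:A_r\otimes M_1\to M_2$, $\gamma_i\otimes m\mapsto M(\gamma_i)(m)$; $M\in\mathrm{rep}_{\mathrm{proj}}(K_r,d)$ means $\psi_M|_{\mathfrak v\otimes M_1}$ is injective for every $d$-dimensional subspace $\mathfrak v\subseteq A_r$. For an injective linear map $\alpha:A_e\to A_r$, $\alpha^*(M)\in\mathrm{rep}(K_e)$ is $(M_1,M_2,(\psi_M(\alpha(\gamma_j)\otimes-))_{j\le e})$. $M$ is $e$-homogeneous ($1\le e\le r$) if $\alpha^*(M)\cong\beta^*(M)$ for all injective linear maps $\alpha,\beta:A_e\to A_r$. A brick is a representation with endomorphism ring $k$. *)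

From HB Require Import structures.
From mathcomp Require Import all_boot all_order all_algebra.
Set Implicit Arguments. Unset Strict Implicit. Unset Printing Implicit Defensive.
Import GRing.Theory.
Local Open Scope ring_scope.

(* A finite-dimensional representation M of the Kronecker quiver K_r over k
   is encoded by M_1 = k^a, M_2 = k^b (row vectors) and, for each arrow
   gamma_i (i < r), the matrix M i : 'M_(a,b); the linear map M(gamma_i)
   sends the row vector m to  m *m M i. *)
Definition krep (k : fieldType) (r a b : nat) := 'I_r -> 'M[k]_(a, b).

(* An injective linear map alpha : A_e -> A_r, gamma_j |-> sum_i alpha j i gamma_i,
   is a matrix 'M_(e, r) of full row rank (row_free).
   pullback alpha M = alpha^*(M), with arrows  psi_M(alpha(gamma_j) (x) -). *)
Definition pullback (k : fieldType) (r e a b : nat) (alpha : 'M[k]_(e, r))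
  (M : krep k r a b) : krep k e a b :=
  fun j => \sum_(i < r) alpha j i *: M i.

(* psi_N : A_e (x) N_1 -> N_2 injective; A_e (x) N_1 is identified with
   N_1^e via the basis gamma_1..gamma_e. *)
Definition psi_injective (k : fieldType) (e a b : nat) (N : krep k e a b) : Prop :=
  forall m : 'I_e -> 'rV[k]_a,
    \sum_(j < e) m j *m N j = 0 -> forall j, m j = 0.

(* M in rep_proj(K_r, d): for every d-dimensional subspace v of A_r
   (given by a basis, i.e. the rows of a full-row-rank matrix alpha),
   psi_M restricted to v (x) M_1 is injective. *)
Definition rep_proj (k : fieldType) (r d a b : nat) (M : krep k r a b) : Prop :=
  forall alpha : 'M[k]_(d, r), row_free alpha -> psi_injective (pullback alpha M).

Definition krep_iso (k : fieldType) (e a b : nat) (N N' : krep k e a b) : Prop :=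
  exists (P : 'M[k]_a) (Q : 'M[k]_b),
    P \in unitmx /\ Q \in unitmx /\ forall j, N j *m Q = P *m N' j.

Definition homogeneous (k : fieldType) (r e a b : nat) (M : krep k r a b) : Prop :=
  forall alpha beta : 'M[k]_(e, r), row_free alpha -> row_free beta ->
    krep_iso (pullback alpha M) (pullback beta M).

Definition brick (k : fieldType) (r a b : nat) (M : krep k r a b) : Prop :=
  (0 < a + b)%N /\
  forall (P : 'M[k]_a) (Q : 'M[k]_b), (forall i, M i *m Q = P *m M i) ->
    exists c : k, P = c%:M /\ Q = c%:M.

From mathcomp Require Import all_boot all_order all_algebra perm zify.
Set Implicit Arguments. Unset Strict Implicit. Unset Printing Implicit Defensive.
Import GRing.Theory.
Local Open Scope ring_scope.

(* Take M_1 = k^(d+2) and let M_2 be the quotient of A_r (x) M_1 by the pencil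
   spanned by w_0 = sum_(i <= d) gamma_i (x) e_i and w_1 = sum_(i <= d) gamma_i (x) e_(i+1),
   so that ker psi_M is exactly this pencil.  Every nonzero element of the pencil
   has tensor rank d+1, hence lies in no v (x) M_1 with dim v = d: M lies in
   rep_proj(K_r, d).  An endomorphism (P, Q) of M maps the pencil into itself
   through P; comparing rows of w_0 P and w_1 P forces P to be scalar, and then Q
   is the same scalar because psi_M is onto, so M is a brick.  Finally an
   isomorphism between the restrictions of M to v = <gamma_0, ..., gamma_d> and to
   another (d+1)-dimensional v' would carry w_0, w_1 into nonzero elements of the
   pencil lying in v' (x) M_1 with prescribed rows.  This is impossible for
   v' = <gamma_1, ..., gamma_(d+1)> when r >= d+2, and, when r = d+1 (so d >= 2),
   for the v' obtained from v by exchanging gamma_0 and gamma_1. *)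

Lemma widen_ord_inj m n (le_mn : (m <= n)%N) : injective (widen_ord le_mn).
Proof. by move=> i j /(congr1 val) ij; apply: val_inj. Qed.

Lemma mxrank_mxsub (k : fieldType) m n m' n' (f : 'I_m' -> 'I_m) (g : 'I_n' -> 'I_n)
    (A : 'M[k]_(m, n)) :
  (\rank (mxsub f g A) <= \rank A)%N.
Proof.
rewrite -{1}[A]mulmx1 mxsub_mul.
by apply: leq_trans (mxrankM_maxl _ _) _; apply/mxrankS/rowsub_sub.
Qed.

Lemma mxvec_sub_adds2 (k : fieldType) m n (A B W : 'M[k]_(m, n)) :
  (mxvec W <= mxvec A + mxvec B)%MS <-> exists s t, W = s *: A + t *: B.
Proof.
split=> [/sub_addsmxP [[u v] /= Wuv] | [s [t ->]]].
  exists (u 0 0), (v 0 0); apply: (can_inj mxvecK).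
  by rewrite Wuv linearD !linearZ /= -!mul_scalar_mx -!mx11_scalar.
apply/sub_addsmxP; exists (s%:M, t%:M).
by rewrite linearD !linearZ /= !mul_scalar_mx.
Qed.

Lemma trmx_free_mul_eq0 (k : fieldType) e r p (alpha : 'M[k]_(e, r)) (X : 'M[k]_(e, p)) :
  row_free alpha -> alpha^T *m X = 0 -> X = 0.
Proof.
move=> alpha_free; rewrite -(mulmx0 _ alpha^T) => /row_full_inj; apply.
by rewrite /row_full mxrank_tr.
Qed.

Section Selection.
Variables (k : fieldType) (e r : nat) (f : 'I_e -> 'I_r).

Definition selmx : 'M[k]_(e, r) := rowsub f 1%:M.

Lemma row_selmxT_mul p (X : 'M[k]_(e, p)) i :
  row i (selmx^T *m X) = \sum_(j | f j == i) row j X.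
Proof.
rewrite row_mul mulmx_sum_row [RHS]big_mkcond /=; apply: eq_bigr => j _.
by rewrite !mxE; case: eqP => _; rewrite ?scale1r ?scale0r.
Qed.

Lemma row_selmxT_mul_out p (X : 'M[k]_(e, p)) i :
  (forall j, f j != i) -> row i (selmx^T *m X) = 0.
Proof. by move=> not_img; rewrite row_selmxT_mul big_pred0 // => j; apply/negbTE. Qed.

Hypothesis f_inj : injective f.

Lemma row_selmxT_mul_img p (X : 'M[k]_(e, p)) j : row (f j) (selmx^T *m X) = row j X.
Proof. by rewrite row_selmxT_mul (big_pred1 j) // => j'; rewrite inj_eq. Qed.

Lemma selmx_free : row_free selmx.
Proof.
apply/row_freeP; exists selmx^T; rewrite {1}/selmx -rowsubE.
by apply/row_matrixP => j; rewrite row_rowsub -[selmx^T]mulmx1 row_selmxT_mul_img.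
Qed.

End Selection.

Section Psi.
Variable k : fieldType.

(* W stands for the tensor sum_j gamma_j (x) row j W of A_e (x) N_1. *)
Definition psi e a b (N : krep k e a b) (W : 'M[k]_(e, a)) : 'rV_b :=
  \sum_(j < e) row j W *m N j.

Lemma psi_eq0_injective e a b (N : krep k e a b) :
  (forall W, psi N W = 0 -> W = 0) -> psi_injective N.
Proof.
move=> psiN_inj m m0 j; have /(congr1 (row j)) : \matrix_j m j = 0.
  by apply: psiN_inj; rewrite /psi; under eq_bigr do rewrite rowK.
by rewrite rowK row0.
Qed.

Lemma psi_pullback r e a b (alpha : 'M[k]_(e, r)) (M : krep k r a b) W :
  psi (pullback alpha M) W = psi M (alpha^T *m W).
Proof.
rewrite /psi /pullback; under eq_bigr do rewrite mulmx_sumr.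
rewrite exchange_big /=; apply: eq_bigr => i _.
rewrite row_mul (mulmx_sum_row (row i alpha^T) W) mulmx_suml.
by apply: eq_bigr => j _; rewrite -scalemxAl scalemxAr !mxE.
Qed.

Section Morphism.
Variables (e a b : nat) (N N' : krep k e a b) (P : 'M[k]_a) (Q : 'M[k]_b).
Hypothesis PQ : forall j, N j *m Q = P *m N' j.

Lemma psi_morphism W : psi N W *m Q = psi N' (W *m P).
Proof.
rewrite /psi mulmx_suml; apply: eq_bigr => j _.
by rewrite -mulmxA PQ row_mul mulmxA.
Qed.

Lemma psi_morphism_eq0 W : psi N W = 0 -> psi N' (W *m P) = 0.
Proof. by rewrite -psi_morphism => ->; rewrite mul0mx. Qed.

End Morphism.
End Psi.

Section Presentation.
Variables (k : fieldType) (r a m : nat) (S : 'M[k]_(m, r * a)).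

(* The representation with N_1 = k^a and N_2 = (A_r (x) k^a) / <rows of S>:
   B is a surjection whose kernel is the row space of S, and psi is W |-> mxvec W *m B. *)
Definition pres_dim := \rank (cokermx S).
Local Notation B := (col_base (cokermx S)).

Definition pres_krep : krep k r a pres_dim :=
  fun i => \matrix_(j < a) (mxvec (delta_mx i j) *m B).

Lemma psi_pres_krep W : psi pres_krep W = mxvec W *m B.
Proof.
rewrite {2}(matrix_sum_delta W) /psi linear_sum mulmx_suml; apply: eq_bigr => i _.
rewrite linear_sum mulmx_suml mulmx_sum_row; apply: eq_bigr => j _.
by rewrite rowK linearZ -scalemxAl mxE.
Qed.

Lemma psi_pres_krep_eq0 W : psi pres_krep W = 0 <-> (mxvec W <= S)%MS.
Proof.
rewrite psi_pres_krep submxE -[X in _ <-> _ *m X == 0](mulmx_base (cokermx S)) mulmxA.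
by rewrite mulmx_free_eq0 ?row_base_free //; split=> /eqP.
Qed.

Lemma pres_krep_endo_scalar P Q c :
  (forall i, pres_krep i *m Q = P *m pres_krep i) -> P = c%:M -> Q = c%:M.
Proof.
move=> PQ Pc; apply: (row_full_inj (col_base_full (cokermx S))).
rewrite -[B *m Q]mul1mx -[B *m c%:M]mul1mx; apply/row_matrixP => i.
rewrite !row_mul row1; have := psi_morphism PQ (vec_mx (delta_mx 0 i)).
rewrite Pc !psi_pres_krep mul_mx_scalar linearZ /= -scalemxAl -mul_mx_scalar.
by rewrite vec_mxK -!mulmxA.
Qed.

End Presentation.

Section Pencil.
Variables (k : fieldType) (r d : nat).
Local Notation a := d.+2.

Definition relmx (o : nat) : 'M[k]_(r, a) :=
  \matrix_(i, l) (((l : nat) == o + i) && (i <= d))%N%:R.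

Definition pencil (s t : k) := s *: relmx 0 + t *: relmx 1.

Lemma pencilE s t i l :
  pencil s t i l =
  s * (((l : nat) == i) && (i <= d))%N%:R + t * (((l : nat) == i.+1) && (i <= d))%N%:R.
Proof. by rewrite !mxE add0n add1n. Qed.

Lemma pencil_diag s t (i : 'I_r) (l : 'I_a) :
  (i <= d)%N -> (l : nat) = i -> pencil s t i l = s.
Proof. by move=> le_id li; rewrite pencilE li eqxx le_id ltn_eqF // mulr1 mulr0 addr0. Qed.

Lemma pencil_superdiag s t (i : 'I_r) (l : 'I_a) :
  (i <= d)%N -> (l : nat) = i.+1 -> pencil s t i l = t.
Proof. by move=> le_id li; rewrite pencilE li eqxx le_id gtn_eqF // mulr1 mulr0 add0r. Qed.

Lemma pencil_off s t (i : 'I_r) (l : 'I_a) :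
  l != i :> nat -> l != i.+1 :> nat -> pencil s t i l = 0.
Proof. by move=> /negbTE l_i /negbTE l_Si; rewrite pencilE l_i l_Si !mulr0 addr0. Qed.

Lemma row_relmx (o : nat) (i : 'I_r) (c : 'I_a) :
  (i <= d)%N -> (c : nat) = (o + i)%N -> row i (relmx o) = delta_mx 0 c.
Proof.
move=> le_id ci; apply/rowP => l; rewrite !mxE le_id andbT -ci eqxx /=.
by rewrite (inj_eq val_inj).
Qed.

Lemma row_relmx_mul (o : nat) (P : 'M[k]_a) (i : 'I_r) (c : 'I_a) :
  (i <= d)%N -> (c : nat) = (o + i)%N -> row i (relmx o *m P) = row c P.
Proof. by move=> le_id ci; rewrite row_mul (row_relmx le_id ci) -rowE. Qed.

Lemma relmx_neq0 o : (0 < r)%N -> (o <= 1)%N -> relmx o != 0.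
Proof.
move=> r_gt0 le_o1; apply/negP => /eqP /matrixP /(_ (Ordinal r_gt0) (inord o)).
rewrite !mxE inordK; last by lia.
by rewrite addn0 eqxx /= => /eqP; rewrite oner_eq0.
Qed.

(* On the first d+1 rows, the columns 0..d (if s != 0) or 1..d+1 (if t != 0)
   give a triangular minor with diagonal s, resp. t. *)
Lemma pencil_rank s t : (d < r)%N -> (s != 0) || (t != 0) -> (d < \rank (pencil s t))%N.
Proof.
move=> lt_dr st_neq0.
have minor_unit (g : 'I_d.+1 -> 'I_a) :
    mxsub (widen_ord lt_dr) g (pencil s t) \in unitmx -> (d < \rank (pencil s t))%N.
  by move/mxrank_unit => rank_minor; rewrite -ltnS -{1}rank_minor ltnS mxrank_mxsub.
have [s_neq0 | /= s0] := boolP (s != 0).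
  apply: (minor_unit (widen_ord (leqnSn _))).
  rewrite unitmxE -det_tr det_trig; last first.
    apply/is_trig_mxP => i j lt_ij; rewrite 2!mxE pencil_off //=.
      by rewrite neq_ltn lt_ij.
    by rewrite neq_ltn ltnS ltnW.
  rewrite unitfE prodf_seq_neq0; apply/allP => i _ /=.
  by rewrite 2!mxE pencil_diag //= -ltnS.
move: st_neq0; rewrite (negPn s0) /= => t_neq0.
apply: (minor_unit (lift ord0)).
rewrite unitmxE det_trig; last first.
  apply/is_trig_mxP => i j lt_ij; rewrite mxE pencil_off //= /bump /= add1n.
    by rewrite gtn_eqF // ltnS ltnW.
  by rewrite eqSS gtn_eqF.
rewrite unitfE prodf_seq_neq0; apply/allP => i _ /=.
by rewrite mxE pencil_superdiag //= -ltnS.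
Qed.

Definition pencil_krep := pres_krep (mxvec (relmx 0) + mxvec (relmx 1))%MS.

Lemma psi_pencil_krep_eq0 W : psi pencil_krep W = 0 <-> exists s t, W = pencil s t.
Proof. by rewrite psi_pres_krep_eq0; exact: mxvec_sub_adds2. Qed.

Lemma psi_pencil_krep_relmx o : (o <= 1)%N -> psi pencil_krep (relmx o) = 0.
Proof.
case: o => [|[|//]] _; apply/psi_pencil_krep_eq0; [exists 1, 0 | exists 0, 1];
  by rewrite /pencil !scale0r ?addr0 ?add0r scale1r.
Qed.

End Pencil.

Section PencilKrep.
Variables (k : fieldType) (r d : nat).
Hypothesis lt_dr : (d < r)%N.
Local Notation a := d.+2.
Local Notation M := (@pencil_krep k r d).
Local Notation w := (relmx k r d).
Local Notation w' := (relmx k d.+1 d).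
Local Notation pencil := (@pencil k r d).

Lemma pencil_krep_proj : rep_proj d M.
Proof.
move=> alpha alpha_free; apply: psi_eq0_injective => X.
rewrite psi_pullback => /psi_pencil_krep_eq0 [s [t alphaX]].
have [st_neq0 | /norP [/negPn/eqP s0 /negPn/eqP t0]] := boolP ((s != 0) || (t != 0)).
  have := pencil_rank lt_dr st_neq0; rewrite -alphaX ltnNge.
  by rewrite (leq_trans (mxrankM_maxl _ _)) // rank_leq_col.
by apply: trmx_free_mul_eq0 alpha_free _; rewrite alphaX /pencil s0 t0 !scale0r addr0.
Qed.

Lemma pencil_stable_scalar (P : 'M[k]_a) : (0 < d)%N ->
  (exists s t, w 0 *m P = pencil s t) -> (exists s t, w 1 *m P = pencil s t) ->
  exists c, P = c%:M.
Proof.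
move=> d_gt0 [s [t w0P]] [s' [t' w1P]].
pose i0 : 'I_r := Ordinal (leq_ltn_trans (leq0n d) lt_dr).
pose i1 : 'I_r := Ordinal (leq_ltn_trans d_gt0 lt_dr).
have /rowP rows_eq : row i1 (pencil s t) = row i0 (pencil s' t').
  by rewrite -w0P -w1P !(row_relmx_mul P (c := inord 1)) // inordK.
have t0 : t = 0.
  have := rows_eq (inord 2); rewrite mxE [RHS]mxE pencil_superdiag ?inordK //.
  by rewrite pencil_off ?inordK.
have s'0 : s' = 0.
  have := rows_eq (inord 0); rewrite mxE [RHS]mxE pencil_off ?inordK //.
  by rewrite pencil_diag ?inordK.
have t's : t' = s.
  have := rows_eq (inord 1); rewrite mxE [RHS]mxE pencil_diag ?inordK //.
  by rewrite pencil_superdiag ?inordK.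
have w0P_scalar : w 0 *m P = s *: w 0 by rewrite w0P t0 /pencil scale0r addr0.
have w1P_scalar : w 1 *m P = s *: w 1 by rewrite w1P s'0 t's /pencil scale0r add0r.
exists s; apply/row_matrixP => c; rewrite -scalemx1 linearZ /= (@row1 k).
case: c => [[|c] lt_ca].
  rewrite -(row_relmx_mul (o := 0) P (i := i0)) // w0P_scalar linearZ /=.
  by rewrite (@row_relmx _ _ _ 0 i0 (Ordinal lt_ca)).
have lt_cr : (c < r)%N by lia.
rewrite -(row_relmx_mul (o := 1) P (i := Ordinal lt_cr)) /=; try lia.
by rewrite w1P_scalar linearZ /= (@row_relmx _ _ _ 1 (Ordinal lt_cr) (Ordinal lt_ca)) //=; lia.
Qed.

Lemma pencil_krep_brick : (0 < d)%N -> brick M.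
Proof.
move=> d_gt0; split=> // P Q PQ.
have w_stable o : (o <= 1)%N -> exists s t, w o *m P = pencil s t.
  by move=> le_o1; apply/psi_pencil_krep_eq0/(psi_morphism_eq0 PQ)/psi_pencil_krep_relmx.
have [c P_scalar] := pencil_stable_scalar d_gt0 (w_stable 0%N isT) (w_stable 1%N isT).
by exists c; split=> //; exact: pres_krep_endo_scalar PQ P_scalar.
Qed.

Local Notation alpha := (selmx k (widen_ord lt_dr)).

Lemma selmx_widen_relmx o : alpha^T *m w' o = w o.
Proof.
apply/row_matrixP => i; have [lt_id | le_di] := ltnP i d.+1.
  have -> : i = widen_ord lt_dr (Ordinal lt_id) by exact: val_inj.
  rewrite row_selmxT_mul_img; first by apply/rowP => l; rewrite !mxE.
  exact: widen_ord_inj.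
rewrite row_selmxT_mul_out => [|j]; last by rewrite -val_eqE /= neq_ltn (leq_trans _ le_di).
by apply/rowP => l; rewrite !mxE leqNgt le_di andbF.
Qed.

Lemma homogeneous_pullback_pencil (beta : 'M[k]_(d.+1, r)) :
  homogeneous d.+1 M -> row_free beta ->
  exists P : 'M[k]_a, forall o, (o <= 1)%N -> exists s t,
    ((s != 0) || (t != 0)) /\ beta^T *m (w' o *m P) = pencil s t.
Proof.
move=> hom beta_free.
have [P [Q [P_unit [_ PQ]]]] := hom _ _ (selmx_free k (@widen_ord_inj _ _ lt_dr)) beta_free.
exists P => o le_o1; have /psi_pencil_krep_eq0 [s [t betaP]] :
    psi M (beta^T *m (w' o *m P)) = 0.
  rewrite -psi_pullback; apply: (psi_morphism_eq0 PQ).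
  by rewrite psi_pullback selmx_widen_relmx psi_pencil_krep_relmx.
exists s, t; split=> //; apply: contraTT (@relmx_neq0 k d.+1 d o (ltn0Sn d) le_o1).
rewrite negb_or !negbK => /andP [/eqP s0 /eqP t0]; apply/eqP.
move: betaP; rewrite s0 t0 /pencil !scale0r addr0 => /(trmx_free_mul_eq0 beta_free).
by move/eqP; rewrite mulmx_free_eq0 ?row_free_unit // => /eqP.
Qed.

Lemma pencil_krep_not_homogeneous_shift : (d.+2 <= r)%N -> ~ homogeneous d.+1 M.
Proof.
move=> le_d2r hom.
pose shift (j : 'I_d.+1) : 'I_r := widen_ord le_d2r (lift ord0 j).
have shift_inj : injective shift by move=> j1 j2 /widen_ord_inj /lift_inj.
have [P pencilP] := homogeneous_pullback_pencil hom (selmx_free k shift_inj).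
have [s [t [st_neq0 shiftP]]] := pencilP 0%N (leq0n 1).
pose i0 : 'I_r := Ordinal (leq_ltn_trans (leq0n d) lt_dr).
have /rowP row0_eq0 : row i0 (pencil s t) = 0 by rewrite -shiftP row_selmxT_mul_out.
have := row0_eq0 (inord 0); rewrite mxE [RHS]mxE pencil_diag ?inordK // => s0.
have := row0_eq0 (inord 1); rewrite mxE [RHS]mxE pencil_superdiag ?inordK // => t0.
by move: st_neq0; rewrite s0 t0 eqxx.
Qed.

(* Row 0 of the transported w_1 and row 2 of the transported w_0 are both row 2 of P;
   in a nonzero element of the pencil these rows must differ. *)
Lemma pencil_krep_not_homogeneous_swap : (2 <= d)%N -> ~ homogeneous d.+1 M.
Proof.
move=> le_2d hom.
pose swap (j : 'I_d.+1) : 'I_r := widen_ord lt_dr (tperm ord0 (inord 1) j).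
have swap_inj : injective swap by move=> j1 j2 /widen_ord_inj /perm_inj.
have [P pencilP] := homogeneous_pullback_pencil hom (selmx_free k swap_inj).
have [s [t [st_neq0 swapP1]]] := pencilP 1%N (leqnn 1).
have [s' [t' [_ swapP0]]] := pencilP 0%N (leq0n 1).
have /rowP rows_eq : row (swap (inord 1)) (pencil s t) = row (swap (inord 2)) (pencil s' t').
  rewrite -swapP1 -swapP0 !row_selmxT_mul_img //.
  by rewrite !(row_relmx_mul P (c := inord 2)) // !inordK //; lia.
have swap1 : swap (inord 1) = 0 :> nat by rewrite /= tpermR.
have swap2 : swap (inord 2) = 2 :> nat by rewrite /= tpermD -?val_eqE /= !inordK //; lia.
have s0 : s = 0.
  have := rows_eq (inord 0); rewrite mxE [RHS]mxE pencil_diag ?inordK ?swap1 //.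
  by rewrite pencil_off ?inordK ?swap2.
have t0 : t = 0.
  have := rows_eq (inord 1); rewrite mxE [RHS]mxE pencil_superdiag ?inordK ?swap1 //.
  by rewrite pencil_off ?inordK ?swap2.
by move: st_neq0; rewrite s0 t0 eqxx.
Qed.

End PencilKrep.

Theorem proposition5p2p1 (k : closedFieldType) (r d : nat) :
  (3 <= r)%N -> (1 <= d)%N -> (d <= r - 1)%N ->
  exists (a b : nat) (M : krep k r a b),
    brick M /\ rep_proj d M /\ ~ homogeneous (d.+1) M.
Proof.
move=> le_3r le_1d le_d_r1.
have lt_dr : (d < r)%N by lia.
exists d.+2, _, (@pencil_krep k r d); split; first exact: pencil_krep_brick.
split; first exact: pencil_krep_proj.
have [lt_d1r | le_r_d1] := ltnP d.+1 r; first exact: pencil_krep_not_homogeneous_shift.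
by apply: pencil_krep_not_homogeneous_swap; lia.
Qed.
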